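(* Let $f\in\mathrm{Homeo}(\mathbb T^2)$ be semiconjugate to a rigid rotation $R_\rho$ of $\mathbb S^1$, and let $\Omega\subset\mathbb T^2$ be an $f$-invariant externally transitive set. Then for any two semiconjugacies $h_1,h_2$ from $f$ to $R_\rho$ there is a rigid rotation $R$ of $\mathbb S^1$ with $h_1|_\Omega=(R\circ h_2)|_\Omega$.
   Context: A semiconjugacy from $f$ to $R_\rho(x)=x+\rho$ is a continuous surjection $h:\mathbb T^2\to\mathbb S^1$ with $h\circ f=R_\rho\circ h$. An $f$-invariant set $\Omega$ is externally transitive if for all $x,y\in\Omega$ and neighbourhoods $U_x,U_y$ of $x,y$ in $\mathbb T^2$ there is $n\in\mathbb N$ with $f^n(U_x)\cap U_y\neq\emptyset$. *)

From Stdlib Require Import Reals Lra.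
Open Scope R_scope.

(** The circle S^1 = R/Z, represented by the fundamental domain [0,1). *)
Definition S1 : Type := {x : R | 0 <= x < 1}.

Lemma frac_part_in (x : R) : 0 <= frac_part x < 1.
Proof. destruct (base_fp x) as [H1 H2]. lra. Qed.

Definition S1_of (x : R) : S1 := exist _ (frac_part x) (frac_part_in x).

Definition rot (rho : R) (x : S1) : S1 := S1_of (proj1_sig x + rho).

Definition dS1 (x y : S1) : R :=
  let d := Rabs (proj1_sig x - proj1_sig y) in Rmin d (1 - d).

Definition T2 : Type := (S1 * S1)%type.
Definition dT2 (p q : T2) : R := Rmax (dS1 (fst p) (fst q)) (dS1 (snd p) (snd q)).

Definition continuous_metric {X Y : Type} (dX : X -> X -> R) (dY : Y -> Y -> R)
  (g : X -> Y) : Prop :=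
  forall x eps, 0 < eps -> exists delta, 0 < delta /\
    forall y, dX x y < delta -> dY (g x) (g y) < eps.

Definition homeo_T2 (f : T2 -> T2) : Prop :=
  exists g : T2 -> T2,
    (forall x, g (f x) = x) /\ (forall y, f (g y) = y) /\
    continuous_metric dT2 dT2 f /\ continuous_metric dT2 dT2 g.

Definition semiconjugacy (f : T2 -> T2) (rho : R) (h : T2 -> S1) : Prop :=
  continuous_metric dT2 dS1 h /\
  (forall y : S1, exists x : T2, h x = y) /\
  (forall x, h (f x) = rot rho (h x)).

Definition invariant (f : T2 -> T2) (Omega : T2 -> Prop) : Prop :=
  (forall x, Omega x -> Omega (f x)) /\
  (forall y, Omega y -> exists x, Omega x /\ f x = y).

Definition nbhd (U : T2 -> Prop) (x : T2) : Prop :=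
  exists eps, 0 < eps /\ forall y, dT2 x y < eps -> U y.

Definition externally_transitive (f : T2 -> T2) (Omega : T2 -> Prop) : Prop :=
  forall x y, Omega x -> Omega y ->
  forall Ux Uy, nbhd Ux x -> nbhd Uy y ->
  exists n : nat, (1 <= n)%nat /\ exists z, Ux z /\ Uy (Nat.iter n f z).

From Stdlib Require Import Reals Lra Lia ZArith Classical.
Open Scope R_scope.

(** Represent points of S^1 = R/Z by reals in [0,1) and,
    for two semiconjugacies h1, h2, consider the real "phase"
    phase w = h1 w - h2 w, which is only meaningful modulo Z.
    (1) Since both h_i intertwine f with the same rotation R_rho, the phase
        is f-invariant modulo Z.
    (2) Since both h_i are continuous, the phase is continuous modulo Z.
    (3) An f-invariant function that is continuous modulo Z is constant
        modulo Z on every externally transitive set: for x, y in Omega an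
        orbit segment z, ..., f^n z goes from near x to near y, so the phase
        at x is close to the phase at z, equal to the phase at f^n z, close
        to the phase at y; letting the tolerance go to 0 gives equality.
    The theorem follows with r the phase at any point of Omega.
    The file first develops congruence and closeness modulo Z, then the
    link with the circle S^1 (rotations, metric), then step (3) in general,
    and finally steps (1)-(2) and the theorem. *)

Definition eqmodZ (u v : R) : Prop := exists k : Z, u - v = IZR k.

Definition closeZ (e u v : R) : Prop := exists k : Z, Rabs (u - v - IZR k) < e.

Lemma eqmodZ_refl (u : R) : eqmodZ u u.
Proof. exists 0%Z. simpl. ring. Qed.

Lemma eqmodZ_sym (u v : R) : eqmodZ u v -> eqmodZ v u.
Proof. intros [k H]. exists (- k)%Z. rewrite opp_IZR. lra. Qed.

Lemma eqmodZ_trans (u v w : R) : eqmodZ u v -> eqmodZ v w -> eqmodZ u w.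
Proof. intros [k1 H1] [k2 H2]. exists (k1 + k2)%Z. rewrite plus_IZR. lra. Qed.

Lemma eqmodZ_frac (u : R) : eqmodZ (frac_part u) u.
Proof. exists (- Int_part u)%Z. unfold frac_part. rewrite opp_IZR. ring. Qed.

Lemma closeZ_sym (e u v : R) : closeZ e u v -> closeZ e v u.
Proof.
  intros [k H]. exists (- k)%Z. rewrite opp_IZR.
  replace (v - u - - IZR k) with (- (u - v - IZR k)) by ring.
  now rewrite Rabs_Ropp.
Qed.

Lemma closeZ_trans (e1 e2 u v w : R) :
  closeZ e1 u v -> closeZ e2 v w -> closeZ (e1 + e2) u w.
Proof.
  intros [k1 H1] [k2 H2]. exists (k1 + k2)%Z. rewrite plus_IZR.
  replace (u - w - (IZR k1 + IZR k2))
    with ((u - v - IZR k1) + (v - w - IZR k2)) by ring.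
  eapply Rle_lt_trans; [apply Rabs_triang | lra].
Qed.

Lemma closeZ_eqmodZ (e u v w : R) : closeZ e u v -> eqmodZ v w -> closeZ e u w.
Proof.
  intros [k1 H1] [k2 H2]. exists (k1 + k2)%Z. rewrite plus_IZR.
  replace (u - w - (IZR k1 + IZR k2)) with (u - v - IZR k1) by lra. exact H1.
Qed.

Lemma closeZ_minus (e1 e2 u1 v1 u2 v2 : R) :
  closeZ e1 u1 v1 -> closeZ e2 u2 v2 -> closeZ (e1 + e2) (u1 - u2) (v1 - v2).
Proof.
  intros [k1 H1] [k2 H2]. exists (k1 - k2)%Z. rewrite minus_IZR.
  replace (u1 - u2 - (v1 - v2) - (IZR k1 - IZR k2))
    with ((u1 - v1 - IZR k1) + - (u2 - v2 - IZR k2)) by ring.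
  eapply Rle_lt_trans; [apply Rabs_triang | rewrite Rabs_Ropp; lra].
Qed.

Lemma eqmodZ_unit_interval (a b : R) :
  0 <= a < 1 -> 0 <= b < 1 -> eqmodZ a b -> a = b.
Proof.
  intros Ha Hb [k H].
  assert (Hk : k = 0%Z).
  { assert (-1 < k)%Z by (apply lt_IZR; simpl; lra).
    assert (k < 1)%Z by (apply lt_IZR; simpl; lra). lia. }
  subst k. simpl in H. lra.
Qed.

Lemma frac_part_eqmodZ (u v : R) : eqmodZ u v -> frac_part u = frac_part v.
Proof.
  intro H. apply eqmodZ_unit_interval; try apply frac_part_in.
  eapply eqmodZ_trans; [apply eqmodZ_frac|].
  eapply eqmodZ_trans; [exact H | apply eqmodZ_sym, eqmodZ_frac].
Qed.

(** Two points of [0,1) that are arbitrarily close modulo Z coincide: a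
    nonzero integer k keeps a - b - k at distance >= 1 - |a - b|. *)
Lemma closeZ_all_unit_interval (a b : R) :
  0 <= a < 1 -> 0 <= b < 1 -> (forall e, 0 < e -> closeZ e a b) -> a = b.
Proof.
  intros Ha Hb Hclose. destruct (Req_dec a b) as [|Hne]; [assumption | exfalso].
  set (d := Rabs (a - b)).
  assert (Hd : 0 < d < 1) by (unfold d, Rabs; destruct (Rcase_abs (a - b)); lra).
  destruct (Hclose (Rmin d (1 - d))) as [k Hk]; [apply Rmin_pos; lra|].
  destruct (Z.eq_dec k 0) as [->|Hk0].
  - simpl in Hk. replace (a - b - 0) with (a - b) in Hk by ring.
    pose proof (Rmin_l d (1 - d)). unfold d in *. lra.
  - assert (Habs : 1 <= Rabs (IZR k)).
    { rewrite Rabs_Zabs. apply IZR_le. lia. }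
    assert (Htri : Rabs (IZR k) - Rabs (a - b) <= Rabs (a - b - IZR k)).
    { replace (a - b - IZR k) with (- (IZR k - (a - b))) by ring.
      rewrite Rabs_Ropp. apply Rabs_triang_inv. }
    pose proof (Rmin_r d (1 - d)). unfold d in *. lra.
Qed.

Lemma eqmodZ_of_closeZ_all (u v : R) :
  (forall e, 0 < e -> closeZ e u v) -> eqmodZ u v.
Proof.
  intro Hclose.
  assert (Hfrac : frac_part u = frac_part v).
  { apply closeZ_all_unit_interval; try apply frac_part_in.
    intros e He. eapply closeZ_eqmodZ; [| apply eqmodZ_sym, eqmodZ_frac].
    apply closeZ_sym. eapply closeZ_eqmodZ; [| apply eqmodZ_sym, eqmodZ_frac].
    apply closeZ_sym. auto. }
  eapply eqmodZ_trans; [apply eqmodZ_sym, eqmodZ_frac|].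
  rewrite Hfrac. apply eqmodZ_frac.
Qed.

Lemma S1_eq (p q : S1) : proj1_sig p = proj1_sig q -> p = q.
Proof.
  destruct p as [a Ha], q as [b Hb]. simpl. intros <-.
  f_equal. apply proof_irrelevance.
Qed.

Lemma rot_of_eqmodZ (r : R) (p q : S1) :
  eqmodZ (proj1_sig q) (proj1_sig p + r) -> q = rot r p.
Proof.
  intro H. apply S1_eq. unfold rot, S1_of. simpl.
  rewrite <- (frac_part_eqmodZ _ _ H).
  symmetry. apply eqmodZ_unit_interval; [apply frac_part_in | apply (proj2_sig q) |].
  apply eqmodZ_frac.
Qed.

Lemma rot_eqmodZ (r : R) (p : S1) : eqmodZ (proj1_sig (rot r p)) (proj1_sig p + r).
Proof. apply eqmodZ_frac. Qed.

Lemma dS1_closeZ (e : R) (p q : S1) :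
  dS1 p q < e -> closeZ e (proj1_sig p) (proj1_sig q).
Proof.
  destruct p as [a Ha], q as [b Hb]. unfold dS1, Rmin; simpl.
  destruct (Rle_dec _ _); intro H.
  - exists 0%Z. simpl. replace (a - b - 0) with (a - b) by ring. exact H.
  - unfold Rabs in *. destruct (Rcase_abs (a - b)).
    + exists (-1)%Z. simpl. rewrite Rabs_pos_eq; lra.
    + exists 1%Z. simpl. rewrite Rabs_left1; lra.
Qed.

Definition continuous_modZ (g : T2 -> R) : Prop :=
  forall x e, 0 < e -> exists delta, 0 < delta /\
    forall y, dT2 x y < delta -> closeZ e (g x) (g y).

Section InvariantPhase.

Variable f : T2 -> T2.
Variable g : T2 -> R.
Hypothesis g_invariant : forall w, eqmodZ (g (f w)) (g w).
Hypothesis g_continuous : continuous_modZ g.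

Lemma invariant_iter (n : nat) (w : T2) : eqmodZ (g (Nat.iter n f w)) (g w).
Proof.
  induction n as [|n IH]; simpl; [apply eqmodZ_refl|].
  eapply eqmodZ_trans; [apply g_invariant | exact IH].
Qed.

Lemma invariant_constant_on_transitive (Omega : T2 -> Prop) :
  externally_transitive f Omega ->
  forall x y, Omega x -> Omega y -> eqmodZ (g x) (g y).
Proof.
  intros Htrans x y Hx Hy. apply eqmodZ_of_closeZ_all. intros e He.
  destruct (g_continuous x (e / 2)) as [dx [Hdx Px]]; [lra|].
  destruct (g_continuous y (e / 2)) as [dy [Hdy Py]]; [lra|].
  destruct (Htrans x y Hx Hy (fun w => dT2 x w < dx) (fun w => dT2 y w < dy))
    as [n [_ [z [Hz Hnz]]]].
  - exists dx. auto.
  - exists dy. auto.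
  - replace e with (e / 2 + e / 2) by field.
    eapply closeZ_trans; [eapply closeZ_eqmodZ |].
    + exact (Px z Hz).
    + apply eqmodZ_sym, (invariant_iter n).
    + apply closeZ_sym, Py, Hnz.
Qed.

End InvariantPhase.

Section Phase.

Variables (f : T2 -> T2) (rho : R) (h1 h2 : T2 -> S1).

Definition phase (w : T2) : R := proj1_sig (h1 w) - proj1_sig (h2 w).

Lemma phase_invariant :
  (forall w, h1 (f w) = rot rho (h1 w)) ->
  (forall w, h2 (f w) = rot rho (h2 w)) ->
  forall w, eqmodZ (phase (f w)) (phase w).
Proof.
  intros E1 E2 w. unfold phase. rewrite E1, E2.
  destruct (rot_eqmodZ rho (h1 w)) as [k1 H1].
  destruct (rot_eqmodZ rho (h2 w)) as [k2 H2].
  exists (k1 - k2)%Z. rewrite minus_IZR. lra.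
Qed.

Lemma phase_continuous :
  continuous_metric dT2 dS1 h1 -> continuous_metric dT2 dS1 h2 ->
  continuous_modZ phase.
Proof.
  intros C1 C2 x e He.
  destruct (C1 x (e / 2)) as [d1 [Hd1 P1]]; [lra|].
  destruct (C2 x (e / 2)) as [d2 [Hd2 P2]]; [lra|].
  exists (Rmin d1 d2). split; [apply Rmin_pos; assumption|].
  intros y Hy. replace e with (e / 2 + e / 2) by field.
  apply closeZ_minus; apply dS1_closeZ.
  - apply P1. eapply Rlt_le_trans; [exact Hy | apply Rmin_l].
  - apply P2. eapply Rlt_le_trans; [exact Hy | apply Rmin_r].
Qed.

End Phase.

Theorem mainTheorem7 (f : T2 -> T2) (rho : R) (Omega : T2 -> Prop)
  (h1 h2 : T2 -> S1) :
  homeo_T2 f ->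
  semiconjugacy f rho h1 ->
  semiconjugacy f rho h2 ->
  invariant f Omega ->
  externally_transitive f Omega ->
  exists r : R, forall x, Omega x -> h1 x = rot r (h2 x).
Proof.
  intros _ [C1 [_ E1]] [C2 [_ E2]] _ Htrans.
  pose proof (invariant_constant_on_transitive f (phase h1 h2)
                (phase_invariant f rho h1 h2 E1 E2)
                (phase_continuous h1 h2 C1 C2) Omega Htrans) as Hconst.
  destruct (classic (exists x0, Omega x0)) as [[x0 Hx0] | Hempty].
  - exists (phase h1 h2 x0). intros x Hx. apply rot_of_eqmodZ.
    destruct (Hconst x x0 Hx Hx0) as [k Hk]. exists k.
    unfold phase in Hk |- *. lra.
  - exists 0. intros x Hx. exfalso. eauto.
Qed.
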